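(* For every $N$ there is $t>1$ with the following property. Let $\theta\in\Theta_N$ and consider the renormalization triangulation associated with any sector renormalization of $\mathbb{L}_\theta$. Then any two sectors (triangles) of this triangulation have comparable angles at $0$: the ratio of their angles lies in $[1/t,t]$.
   Context: For $\theta\in\mathbb{R}/\mathbb{Z}$ let $\mathbb{L}_\theta:\overline{\mathbb{D}}\to\overline{\mathbb{D}}$, $z\mapsto e^{2\pi i\theta}z$. $\Theta_N$ is the set of $\theta$ such that $\theta=[0;a_1,a_2,\dots]$ with all $|a_i|\le N$, or $\theta=1-[0;a_1,a_2,\dots]$ with all $|a_i|\le N$. A sector renormalization of $\mathbb{L}_\theta$ consists of a closed sector $\mathbb{X}=\mathbb{X}_-\cup\mathbb{X}_+\subset\overline{\mathbb{D}}$ with vertex $0$, split into two closed subsectors with common boundary ray through $1$ (one of them may degenerate to a ray, not both), and iterates $\mathbb{L}_\theta^{\mathbf a}|_{\mathbb{X}_-}$, $\mathbb{L}_\theta^{\mathbf b}|_{\mathbb{X}_+}$ realizing the first return of points of $\mathbb{X}_-\cup\mathbb{X}_+$ to $\mathbb{X}$; the gluing map $z\mapsto z^{1/\omega}$ ($\omega$ the angle of $\mathbb{X}$) projects this pair to a new rotation. The associated renormalization triangulation of $\overline{\mathbb{D}}$ is the collection of sectors $\mathbb{L}_\theta^{i}(\mathbb{X}_-)$, $0\le i\le\mathbf a-1$, and $\mathbb{L}_\theta^{i}(\mathbb{X}_+)$, $0\le i\le\mathbf b-1$. *)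

From Stdlib Require Import Reals List.
Open Scope R_scope.

Fixpoint cf_fin (l : list nat) : R :=
  match l with
  | nil => 0
  | a :: l' => / (INR a + cf_fin l')
  end.

(* n-th convergent [0; a_1, ..., a_n] of the sequence a (a 0 is unused). *)
Definition cf_approx (a : nat -> nat) (n : nat) : R :=
  cf_fin (map a (seq 1 n)).

Definition cf_value (a : nat -> nat) (x : R) : Prop :=
  Un_cv (cf_approx a) x.

(* theta (a real representative of an element of R/Z) lies in Theta_N:
   theta = [0;a_1,a_2,...] or theta = 1 - [0;a_1,a_2,...] modulo Z,
   with all partial quotients 1 <= a_i <= N. *)
Definition in_Theta (N : nat) (theta : R) : Prop :=
  exists (a : nat -> nat) (x : R),
    (forall i, (1 <= i)%nat -> (1 <= a i <= N)%nat) /\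
    cf_value a x /\
    exists k : Z, theta = x + IZR k \/ theta = 1 - x + IZR k.

(* ---------- Sectors of the closed unit disk, in angular coordinates ----------
   Angles are measured in turns (full turn = 1), modulo Z.  A closed sector
   with vertex 0 is {r e^{2 pi i phi} : 0 <= r <= 1, phi in [s, s + w] mod 1},
   encoded by the pair (s, w) (start angle, angular width, 0 <= w < 1);
   w = 0 is a ray.  L_theta acts on angles by phi |-> phi + theta. *)

Definition sector := (R * R)%type.
Definition sec_start (S : sector) : R := fst S.
Definition sec_angle (S : sector) : R := snd S.

Definition fracR (x : R) : R := x - IZR (Int_part x).

Definition in_sector (S : sector) (phi : R) : Prop :=
  fracR (phi - sec_start S) <= sec_angle S.

Definition in_sector_int (S : sector) (phi : R) : Prop :=
  0 < fracR (phi - sec_start S) < sec_angle S.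

Definition rot_sector (theta : R) (n : nat) (S : sector) : sector :=
  (sec_start S + INR n * theta, sec_angle S).

(* The sector X = X_- u X_+ ; X_- = [-alpha, 0], X_+ = [0, beta]
   (the common boundary ray is the ray through 1, i.e. angle 0). *)
Definition Xsec (alpha beta : R) : sector := (- alpha, alpha + beta).
Definition Xminus (alpha : R) : sector := (- alpha, alpha).
Definition Xplus (beta : R) : sector := (0, beta).

(* L_theta^n restricted to Y realizes the first return of the points of Y
   to X: every point of Y lands in X after n iterates, and no earlier iterate
   0 < i < n meets the interior of X (for non-degenerate Y this is exactly the
   first return of the interior points of Y, boundary rays being shared). *)
Definition first_return (theta : R) (X Y : sector) (n : nat) : Prop :=
  (1 <= n)%nat /\
  forall phi, in_sector Y phi ->
    in_sector X (phi + INR n * theta) /\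
    forall i : nat, (0 < i < n)%nat -> ~ in_sector_int X (phi + INR i * theta).

Definition sector_renormalization (theta alpha beta : R) (a b : nat) : Prop :=
  0 <= alpha /\ 0 <= beta /\ 0 < alpha + beta < 1 /\
  first_return theta (Xsec alpha beta) (Xminus alpha) a /\
  first_return theta (Xsec alpha beta) (Xplus beta) b.

Definition renorm_triangulation (theta alpha beta : R) (a b : nat) : list sector :=
  map (fun i => rot_sector theta i (Xminus alpha)) (seq 0 a) ++
  map (fun i => rot_sector theta i (Xplus beta)) (seq 0 b).

From Stdlib Require Import ZArith Reals List Lia Lra.
Open Scope R_scope.

(* If [X_-] first returns at time [a], then [L^a] maps [X_-] into [X], so [a theta]
   lies within [beta] of an integer; the earlier iterates of [X_-] avoid the
   interior of [X], so the points [i theta], [0 <= i < a], are [alpha]-separated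
   on the circle and [alpha (a - 1) <= 1].  Partial quotients bounded by [N] make
   [theta] badly approximable, [q |q theta - m| >= c_N], whence
   [alpha c_N <= alpha a beta <= 2 beta], and symmetrically [beta c_N <= 2 alpha].
   Bad approximability is proved by induction on [q] through the Gauss map
   [x = 1/(A + y)], which turns an approximation [p/q] of [x] into the
   approximation [(q - p A)/p] of [y]. *)

Definition bounded_type (N : nat) (x : R) : Prop :=
  exists a : nat -> nat,
    (forall i, (1 <= i)%nat -> (1 <= a i <= N)%nat) /\ cf_value a x.

Lemma cf_fin_bounds (N : nat) (l : list nat) :
  (forall z, In z l -> (1 <= z <= N)%nat) ->
  0 <= cf_fin l <= 1 /\ (l <> nil -> / (INR N + 1) <= cf_fin l).
Proof.
  induction l as [|z l IH]; intros Hl; simpl.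
  - split; [lra | congruence].
  - destruct IH as [[Hl0 Hl1] _]; [intros w Hw; apply Hl; right; exact Hw|].
    assert (Hz : (1 <= z <= N)%nat) by (apply Hl; left; reflexivity).
    assert (1 <= INR z) by (apply (le_INR 1); lia).
    assert (INR z <= INR N) by (apply le_INR; lia).
    split; [split|].
    + apply Rlt_le, Rinv_0_lt_compat; lra.
    + rewrite <- Rinv_1. apply Rinv_le_contravar; lra.
    + intros _. apply Rinv_le_contravar; lra.
Qed.

Lemma cf_approx_bounds N a n :
  (forall i, (1 <= i)%nat -> (1 <= a i <= N)%nat) -> (1 <= n)%nat ->
  / (INR N + 1) <= cf_approx a n <= 1.
Proof.
  intros Ha Hn. unfold cf_approx.
  destruct (cf_fin_bounds N (map a (seq 1 n))) as [[_ Hle1] Hge].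
  { intros z Hz. apply in_map_iff in Hz as [i [<- Hi]].
    apply in_seq in Hi. apply Ha. lia. }
  split; [apply Hge | exact Hle1].
  destruct n; [lia | discriminate].
Qed.

Lemma Un_cv_eventually_bounds (u : nat -> R) (l lo hi : R) :
  Un_cv u l -> (forall n, (1 <= n)%nat -> lo <= u n <= hi) -> lo <= l <= hi.
Proof.
  intros Hcv Hb.
  split; apply Rnot_lt_le; intros Hl.
  - destruct (Hcv (lo - l)) as [K HK]; [lra|].
    specialize (HK (S K) ltac:(lia)). specialize (Hb (S K) ltac:(lia)).
    unfold Rdist in HK. apply Rabs_def2 in HK. lra.
  - destruct (Hcv (l - hi)) as [K HK]; [lra|].
    specialize (HK (S K) ltac:(lia)). specialize (Hb (S K) ltac:(lia)).
    unfold Rdist in HK. apply Rabs_def2 in HK. lra.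
Qed.

Lemma bounded_type_bounds N x : bounded_type N x -> / (INR N + 1) <= x <= 1.
Proof.
  intros [a [Ha Hcv]]. apply (Un_cv_eventually_bounds _ _ _ _ Hcv).
  intros n Hn. apply cf_approx_bounds; assumption.
Qed.

Lemma cf_approx_S a n :
  cf_approx a (S n) = / (INR (a 1%nat) + cf_approx (fun i => a (S i)) n).
Proof.
  unfold cf_approx. simpl. do 3 f_equal.
  rewrite <- seq_shift, map_map. reflexivity.
Qed.

Lemma bounded_type_gauss N x : bounded_type N x ->
  exists (A : nat) (y : R), (1 <= A <= N)%nat /\ bounded_type N y /\ x = / (INR A + y).
Proof.
  intros Hx. pose proof (bounded_type_bounds N x Hx) as [Hx0 _].
  assert (0 < / (INR N + 1)) by (apply Rinv_0_lt_compat; pose proof (pos_INR N); lra).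
  destruct Hx as [a [Ha Hcv]].
  exists (a 1%nat), (/ x - INR (a 1%nat)).
  split; [apply Ha; lia|]. split.
  - exists (fun i => a (S i)). split; [intros i Hi; apply Ha; lia|].
    assert (Hcont : continuity_pt (fun z => / z - INR (a 1%nat)) x) by (reg; lra).
    apply (Un_cv_ext (fun n => / cf_approx a (n + 1) - INR (a 1%nat))).
    + intros n. rewrite Nat.add_1_r, cf_approx_S, Rinv_inv. ring.
    + exact (continuity_seq _ _ _ Hcont (CV_shift' _ 1 _ Hcv)).
  - replace (INR (a 1%nat) + (/ x - INR (a 1%nat))) with (/ x) by ring.
    rewrite Rinv_inv. reflexivity.
Qed.

Lemma bounded_type_le N x : bounded_type N x -> x * (INR N + 2) <= INR N + 1.
Proof.
  intros Hx. destruct (bounded_type_gauss N x Hx) as [A [y [HA [Hy ->]]]].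
  pose proof (bounded_type_bounds N y Hy) as [Hy0 _].
  assert (HA1 : 1 <= INR A) by (apply (le_INR 1); lia).
  assert (HN : 0 <= INR N) by apply pos_INR.
  assert (Hy1 : 1 <= (INR N + 1) * y).
  { apply (Rmult_le_compat_l (INR N + 1)) in Hy0; [|lra].
    rewrite Rinv_r in Hy0; lra. }
  apply (Rmult_le_reg_r (INR A + y)); [nra|].
  replace (/ (INR A + y) * (INR N + 2) * (INR A + y)) with (INR N + 2) by (field; nra).
  nra.
Qed.

Definition approx_const (M : R) : R := / (8 * M ^ 2).

Lemma approx_const_pos M : 1 <= M -> 0 < approx_const M.
Proof. intros HM. apply Rinv_0_lt_compat. nra. Qed.

Lemma approx_const_spec M : 1 <= M -> 8 * M ^ 2 * approx_const M = 1.
Proof. intros HM. unfold approx_const. field. nra. Qed.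

Lemma approx_const_small M : 1 <= M -> 4 * approx_const M * (M + 1) <= 1.
Proof.
  intros HM. pose proof (approx_const_spec M HM). pose proof (approx_const_pos M HM).
  assert (0 <= approx_const M * (2 * M ^ 2 - M - 1)) by (apply Rmult_le_pos; nra).
  nra.
Qed.

(* Here [D = |q x - p|] and [E = |p y - (q - p A)|] for [x = 1/(A + y)]; the
   factor [1 + 1/q] of the induction hypothesis absorbs the loss [D E] made in
   passing from [y] back to [x]. *)
Lemma gauss_step_estimate (M x p q D E : R) :
  1 <= M -> / M <= x -> x * (M + 1) <= M ->
  1 <= p -> 1 <= q -> 0 <= E -> D = x * E -> p - D <= q * x ->
  approx_const M * (1 + / p) <= p * E ->
  q * D < 2 * approx_const M ->
  approx_const M * (1 + / q) <= q * D.
Proof.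
  intros HM Hx0 Hx1 Hp Hq HE HDE Hqx HpE Hsmall.
  pose proof (approx_const_pos M HM) as Hc.
  pose proof (approx_const_spec M HM) as Hc8.
  pose proof (approx_const_small M HM) as Hc4.
  set (c := approx_const M) in *.
  assert (HxM : 1 <= x * M).
  { apply (Rmult_le_compat_r M) in Hx0; [|lra]. rewrite Rinv_l in Hx0; lra. }
  assert (Hxpos : 0 < x).
  { apply (Rlt_le_trans _ (/ M)); [apply Rinv_0_lt_compat; lra | exact Hx0]. }
  assert (HD : 0 <= D) by (rewrite HDE; apply Rmult_le_pos; lra).
  assert (HD2 : D < 2 * c) by nra.
  assert (Hgap : p <= 2 * M * (q - p)) by nra.
  assert (HEM : E <= M * D) by nra.
  assert (Hloss : q * D >= p * E - M * D ^ 2) by nra.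
  assert (Hquad : M * p * (q * D) ^ 2 <= c * q * (q - p)).
  { assert (HqD : (q * D) ^ 2 <= 4 * c ^ 2).
    { assert (0 <= q * D) by (apply Rmult_le_pos; lra). nra. }
    assert (Hl : 2 * M * (M * p * (q * D) ^ 2) <= p * c).
    { apply (Rle_trans _ (2 * M ^ 2 * p * (4 * c ^ 2))).
      2:{ right. rewrite <- (Rmult_1_r (p * c)), <- Hc8. ring. }
      apply (Rmult_le_compat_l (2 * M ^ 2 * p)) in HqD; [|nra]. nra. }
    assert (Hr : p * c <= 2 * M * (c * q * (q - p))).
    { assert (0 <= 2 * M * c * (q - p) * (q - 1)) by (repeat apply Rmult_le_pos; nra). nra. }
    nra. }
  assert (Hinv : c * / q + M * D ^ 2 <= c * / p).
  { apply (Rmult_le_reg_l (p * q ^ 2)); [nra|].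
    replace (p * q ^ 2 * (c * / q + M * D ^ 2)) with (c * p * q + M * p * (q * D) ^ 2)
      by (field; lra).
    replace (p * q ^ 2 * (c * / p)) with (c * q ^ 2) by (field; lra).
    nra. }
  lra.
Qed.

Lemma bounded_type_numerator_range N x q p :
  bounded_type N x -> (1 <= q)%nat ->
  INR q * Rabs (INR q * x - IZR p) < 2 * approx_const (INR N + 1) ->
  (1 <= p < Z.of_nat q)%Z.
Proof.
  intros Hx Hq Hsmall.
  pose proof (bounded_type_bounds N x Hx) as [Hx0 Hx1].
  pose proof (bounded_type_le N x Hx) as Hx2.
  assert (HM : 1 <= INR N + 1) by (pose proof (pos_INR N); lra).
  pose proof (approx_const_small _ HM) as Hc4.
  pose proof (approx_const_pos _ HM) as Hc.
  assert (Hqr : 1 <= INR q) by (apply (le_INR 1); lia).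
  assert (HxM : 1 <= x * (INR N + 1)).
  { apply (Rmult_le_compat_r (INR N + 1)) in Hx0; [|lra]. rewrite Rinv_l in Hx0; lra. }
  assert (Hx4 : 4 * approx_const (INR N + 1) <= x) by nra.
  assert (H1x4 : 4 * approx_const (INR N + 1) <= 1 - x) by nra.
  pose proof (Rle_abs (INR q * x - IZR p)).
  pose proof (Rle_abs (- (INR q * x - IZR p))). rewrite Rabs_Ropp in *.
  set (D := Rabs (INR q * x - IZR p)) in *.
  assert (HD : 0 <= D) by apply Rabs_pos.
  assert (HqD : D <= INR q * D) by nra.
  enough (~ (p <= 0)%Z /\ ~ (Z.of_nat q <= p)%Z) by lia.
  split; intros Hp.
  - apply IZR_le in Hp. assert (x <= INR q * x) by nra. lra.
  - apply IZR_le in Hp. rewrite <- INR_IZR_INZ in Hp.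
    assert (1 - x <= INR q * (1 - x)) by nra. lra.
Qed.

Lemma bounded_type_badly_approximable N x q p :
  bounded_type N x -> (1 <= q)%nat ->
  approx_const (INR N + 1) * (1 + / INR q) <= INR q * Rabs (INR q * x - IZR p).
Proof.
  revert x p. induction q as [q IH] using lt_wf_ind. intros x p Hx Hq.
  set (M := INR N + 1).
  assert (HM : 1 <= M) by (pose proof (pos_INR N); unfold M; lra).
  assert (Hqr : 1 <= INR q) by (apply (le_INR 1); lia).
  destruct (Rlt_or_le (INR q * Rabs (INR q * x - IZR p)) (2 * approx_const M)) as [Hsmall|Hbig].
  2:{ pose proof (approx_const_pos M HM).
      assert (/ INR q <= 1) by (rewrite <- Rinv_1; apply Rinv_le_contravar; lra). nra. }
  pose proof (bounded_type_numerator_range N x q p Hx Hq Hsmall) as Hp.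
  destruct (bounded_type_gauss N x Hx) as [A [y [HA [Hy Hxy]]]].
  pose proof (bounded_type_bounds N x Hx) as [Hx0 _].
  pose proof (bounded_type_le N x Hx) as Hx1.
  assert (Hxpos : 0 < x).
  { apply (Rlt_le_trans _ (/ M)); [apply Rinv_0_lt_compat; lra | exact Hx0]. }
  assert (HAy : x * (INR A + y) = 1).
  { rewrite Hxy. apply Rinv_l. intros H0. rewrite H0, Rinv_0 in Hxy. lra. }
  set (q' := (Z.of_nat q - p * Z.of_nat A)%Z).
  assert (Hdefect : INR q * x - IZR p = - x * (IZR p * y - IZR q')).
  { unfold q'. rewrite minus_IZR, mult_IZR, <- !INR_IZR_INZ.
    replace (IZR p) with (IZR p * (x * (INR A + y))) at 1 by (rewrite HAy; ring).
    ring. }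
  assert (Hpn : IZR p = INR (Z.to_nat p)) by (rewrite INR_IZR_INZ, Z2Nat.id; [reflexivity | lia]).
  specialize (IH (Z.to_nat p) ltac:(lia) y q' Hy ltac:(lia)).
  rewrite <- Hpn in IH.
  apply (gauss_step_estimate M x (IZR p) (INR q) _ (Rabs (IZR p * y - IZR q'))); auto.
  - replace (INR N + 2) with (M + 1) in Hx1 by (unfold M; ring). exact Hx1.
  - apply IZR_le. lia.
  - apply Rabs_pos.
  - rewrite Hdefect, Rabs_mult, Rabs_Ropp, Rabs_pos_eq; lra.
  - pose proof (Rle_abs (- (INR q * x - IZR p))). rewrite Rabs_Ropp in *. lra.
Qed.

Lemma in_Theta_badly_approximable N theta q (m : Z) :
  in_Theta N theta -> (1 <= q)%nat ->
  approx_const (INR N + 1) <= INR q * Rabs (INR q * theta - IZR m).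
Proof.
  intros [a [x [Ha [Hcv [k Hk]]]]] Hq.
  assert (Hx : bounded_type N x) by (exists a; auto).
  assert (Hc : 0 < approx_const (INR N + 1)).
  { apply approx_const_pos. pose proof (pos_INR N). lra. }
  assert (Hiq : 0 < / INR q) by (apply Rinv_0_lt_compat, (lt_INR 0); lia).
  destruct Hk as [-> | ->].
  - pose proof (bounded_type_badly_approximable N x q (m - Z.of_nat q * k) Hx Hq) as H.
    rewrite minus_IZR, mult_IZR, <- INR_IZR_INZ in H.
    replace (INR q * (x + IZR k) - IZR m) with (INR q * x - (IZR m - INR q * IZR k)) by ring.
    nra.
  - pose proof (bounded_type_badly_approximable N x q (Z.of_nat q + Z.of_nat q * k - m) Hx Hq) as H.
    rewrite minus_IZR, plus_IZR, mult_IZR, <- INR_IZR_INZ in H.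
    replace (INR q * (1 - x + IZR k) - IZR m)
      with (- (INR q * x - (INR q + INR q * IZR k - IZR m))) by ring.
    rewrite Rabs_Ropp. nra.
Qed.

Lemma in_sector_iff S phi : 0 <= sec_angle S < 1 ->
  in_sector S phi <-> exists k : Z, 0 <= phi - sec_start S - IZR k <= sec_angle S.
Proof.
  intros Hw. unfold in_sector, fracR. split.
  - intros H. exists (Int_part (phi - sec_start S)).
    pose proof (base_Int_part (phi - sec_start S)). lra.
  - intros [k Hk]. rewrite <- (Int_part_spec (phi - sec_start S) k); lra.
Qed.

Lemma in_sector_intI S phi (k : Z) : sec_angle S < 1 ->
  0 < phi - sec_start S - IZR k < sec_angle S -> in_sector_int S phi.
Proof.
  intros Hw Hk. unfold in_sector_int, fracR.
  rewrite <- (Int_part_spec (phi - sec_start S) k); lra.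
Qed.

Section FirstReturn.

Variables (theta : R) (X Y : sector) (n : nat).
Hypothesis HX : sec_angle X < 1.
Hypothesis HYX : sec_start X <= sec_start Y /\
  sec_start Y + sec_angle Y <= sec_start X + sec_angle X.
Hypothesis Hreturn : first_return theta X Y n.

(* If [Y + n theta] straddled two lifts of [X], the gap between them (of length
   [1 - sec_angle X > 0]) would contain the image of a point of [Y]. *)
Lemma first_return_displacement : 0 <= sec_angle Y ->
  exists m : Z, sec_start X <= sec_start Y + INR n * theta - IZR m /\
    sec_start Y + sec_angle Y + INR n * theta - IZR m <= sec_start X + sec_angle X.
Proof.
  intros HY0. destruct Hreturn as [_ Hret].
  destruct X as [sx wx], Y as [s w]. unfold sec_start, sec_angle in *; simpl in *.
  assert (Hland : forall u, 0 <= u <= w ->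
    exists k : Z, 0 <= s + u + INR n * theta - sx - IZR k <= wx).
  { intros u Hu. destruct (Hret (s + u)) as [HinX _].
    - apply in_sector_iff; [simpl; lra|]. exists 0%Z. simpl. lra.
    - apply in_sector_iff in HinX; [|simpl; lra]. exact HinX. }
  destruct (Hland 0) as [k Hk]; [lra|].
  destruct (Hland w) as [j Hj]; [lra|].
  assert (Hjk : (j = k \/ j = k + 1)%Z).
  { assert (Hr : -1 < IZR (j - k) < 2) by (rewrite minus_IZR; lra).
    destruct Hr as [Hr1 Hr2]. apply lt_IZR in Hr1, Hr2. lia. }
  destruct Hjk as [-> | ->].
  - exists k. lra.
  - exfalso. rewrite plus_IZR in Hj.
    destruct (Hland (sx + IZR k + (1 + wx) / 2 - s - INR n * theta)) as [l Hl]; [lra|].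
    assert (Hr : 0 < IZR (l - k) < 1) by (rewrite minus_IZR; lra).
    destruct Hr as [Hr1 Hr2]. apply lt_IZR in Hr1, Hr2. lia.
Qed.

(* If [r = i theta - m] had [|r| < w], the point [s + (w - r)/2] of [Y = [s, s + w]]
   would be mapped at time [i] into the interior of [Y], hence of [X]. *)
Lemma first_return_separated i : (0 < i < n)%nat ->
  forall m : Z, sec_angle Y <= Rabs (INR i * theta - IZR m).
Proof.
  intros Hi m. destruct Hreturn as [_ Hret], HYX as [Hs Hsw].
  destruct X as [sx wx], Y as [s w]. unfold sec_start, sec_angle in *; simpl in *.
  apply Rnot_lt_le. intros Hr. apply Rabs_def2 in Hr.
  destruct (Hret (s + (w - (INR i * theta - IZR m)) / 2)) as [_ Hno].
  - apply in_sector_iff; [simpl; lra|]. exists 0%Z. simpl. lra.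
  - apply (Hno i Hi), (in_sector_intI _ _ m); simpl; lra.
Qed.

End FirstReturn.

Lemma nat_injection_le (f : nat -> nat) n K :
  (forall i, (i < n)%nat -> (f i < K)%nat) ->
  (forall i j, (i < n)%nat -> (j < n)%nat -> f i = f j -> i = j) -> (n <= K)%nat.
Proof.
  intros Hrange Hinj.
  rewrite <- (length_seq n 0), <- (length_map f), <- (length_seq K 0).
  apply NoDup_incl_length.
  - apply NoDup_map_NoDup_ForallPairs; [|apply seq_NoDup].
    intros i j Hi Hj. apply in_seq in Hi, Hj. apply Hinj; lia.
  - intros z Hz. apply in_map_iff in Hz as [i [<- Hi]].
    apply in_seq in Hi. apply in_seq. specialize (Hrange i). lia.
Qed.

Lemma Int_part_bounds r : IZR (Int_part r) <= r < IZR (Int_part r) + 1.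
Proof. pose proof (base_Int_part r). lra. Qed.

Lemma Int_part_div_bounds r g : 0 < g ->
  IZR (Int_part (r / g)) * g <= r < (IZR (Int_part (r / g)) + 1) * g.
Proof.
  intros Hg. pose proof (Int_part_bounds (r / g)) as [Hlo Hhi].
  replace r with (r / g * g) at 2 3 by (field; lra).
  split; [apply Rmult_le_compat_r | apply Rmult_lt_compat_r]; lra.
Qed.

Lemma Int_part_nonneg r : 0 <= r -> (0 <= Int_part r)%Z.
Proof.
  intros Hr. pose proof (Int_part_bounds r).
  enough (-1 < Int_part r)%Z by lia.
  apply lt_IZR. lra.
Qed.

(* Points of [[0, 1)] at mutual distance [>= g] lie in distinct boxes
   [[k g, (k + 1) g)], of which there are at most [1/g + 1]. *)
Lemma separated_points_count (f : nat -> R) n g : 0 < g ->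
  (forall i, (i < n)%nat -> 0 <= f i < 1) ->
  (forall i j, (i < n)%nat -> (j < n)%nat -> i <> j -> g <= Rabs (f i - f j)) ->
  g * (INR n - 1) <= 1.
Proof.
  intros Hg Hf Hsep.
  set (box i := Int_part (f i / g)).
  set (K := Int_part (1 / g)).
  assert (Hbox : forall i, (i < n)%nat -> (0 <= box i)%Z).
  { intros i Hi. apply Int_part_nonneg, Rmult_le_pos; [apply Hf, Hi|].
    left. apply Rinv_0_lt_compat, Hg. }
  assert (HK : (0 <= K)%Z).
  { apply Int_part_nonneg, Rmult_le_pos; [lra | left; apply Rinv_0_lt_compat, Hg]. }
  pose proof (Int_part_div_bounds 1 g Hg) as HKg. fold K in HKg.
  assert (Hcount : (n <= Z.to_nat K + 1)%nat).
  { apply (nat_injection_le (fun i => Z.to_nat (box i))).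
    - intros i Hi. specialize (Hbox i Hi).
      enough (box i < K + 1)%Z by lia.
      apply lt_IZR. rewrite plus_IZR.
      pose proof (Int_part_div_bounds (f i) g Hg). specialize (Hf i Hi).
      apply (Rmult_lt_reg_r g); [exact Hg|]. fold (box i) in *. lra.
    - intros i j Hi Hj Hij. apply Z2Nat.inj in Hij; auto.
      destruct (Nat.eq_dec i j) as [|Hne]; [assumption|exfalso].
      pose proof (Int_part_div_bounds (f i) g Hg). pose proof (Int_part_div_bounds (f j) g Hg).
      fold (box i) (box j) in *. rewrite Hij in *.
      specialize (Hsep i j Hi Hj Hne).
      assert (Rabs (f i - f j) < g) by (apply Rabs_def1; lra). lra. }
  apply le_INR in Hcount.
  rewrite plus_INR, (INR_IZR_INZ (Z.to_nat K)), Z2Nat.id in Hcount by exact HK.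
  simpl in Hcount. nra.
Qed.

Lemma rotation_orbit_separated_count theta g n : 0 < g ->
  (forall i, (0 < i < n)%nat -> forall m : Z, g <= Rabs (INR i * theta - IZR m)) ->
  g * (INR n - 1) <= 1.
Proof.
  intros Hg Hsep.
  apply (separated_points_count (fun i => fracR (INR i * theta))); auto.
  - intros i _. unfold fracR. pose proof (Int_part_bounds (INR i * theta)). lra.
  - assert (Hlt : forall i j, (j < i < n)%nat ->
      g <= Rabs (fracR (INR i * theta) - fracR (INR j * theta))).
    { intros i j Hji. unfold fracR.
      replace (INR i * theta - IZR (Int_part (INR i * theta))
                 - (INR j * theta - IZR (Int_part (INR j * theta))))
        with (INR (i - j) * theta - IZR (Int_part (INR i * theta) - Int_part (INR j * theta)))
        by (rewrite minus_INR, minus_IZR by lia; ring).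
      apply Hsep. lia. }
    intros i j Hi Hj Hij. apply Nat.lt_gt_cases in Hij as [Hij | Hij].
    + rewrite Rabs_minus_sym. apply Hlt. lia.
    + apply Hlt. lia.
Qed.

Lemma return_time_angle_bound N theta g h n :
  in_Theta N theta -> (1 <= n)%nat -> 0 <= g < 1 ->
  (forall i, (0 < i < n)%nat -> forall m : Z, g <= Rabs (INR i * theta - IZR m)) ->
  (exists m : Z, Rabs (INR n * theta - IZR m) <= h) ->
  g * approx_const (INR N + 1) <= 2 * h.
Proof.
  intros Htheta Hn Hg Hsep [m Hm].
  pose proof (in_Theta_badly_approximable N theta n m Htheta Hn) as Hc.
  assert (Hh : 0 <= h) by (eapply Rle_trans; [apply Rabs_pos | exact Hm]).
  destruct (Req_dec g 0) as [-> | Hg0]; [lra|].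
  pose proof (rotation_orbit_separated_count theta g n ltac:(lra) Hsep) as Hcount.
  assert (Hnr : 1 <= INR n) by (apply (le_INR 1); exact Hn).
  assert (Hnh : approx_const (INR N + 1) <= INR n * h).
  { eapply Rle_trans; [exact Hc|]. apply Rmult_le_compat_l; lra. }
  nra.
Qed.

Lemma renormalization_angles_comparable N theta alpha beta a b :
  in_Theta N theta -> sector_renormalization theta alpha beta a b ->
  alpha * approx_const (INR N + 1) <= 2 * beta /\
  beta * approx_const (INR N + 1) <= 2 * alpha.
Proof.
  intros Htheta [Ha [Hb [[Hab0 Hab1] [Hminus Hplus]]]].
  assert (HXminus : sec_start (Xsec alpha beta) <= sec_start (Xminus alpha) /\
    sec_start (Xminus alpha) + sec_angle (Xminus alpha)
      <= sec_start (Xsec alpha beta) + sec_angle (Xsec alpha beta))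
    by (unfold sec_start, sec_angle; simpl; lra).
  assert (HXplus : sec_start (Xsec alpha beta) <= sec_start (Xplus beta) /\
    sec_start (Xplus beta) + sec_angle (Xplus beta)
      <= sec_start (Xsec alpha beta) + sec_angle (Xsec alpha beta))
    by (unfold sec_start, sec_angle; simpl; lra).
  assert (HX : sec_angle (Xsec alpha beta) < 1) by (unfold sec_angle; simpl; lra).
  split.
  - apply (return_time_angle_bound N theta alpha beta a Htheta); [apply Hminus | lra | |].
    + apply (first_return_separated theta _ (Xminus alpha) a HX HXminus Hminus).
    + destruct (first_return_displacement theta _ (Xminus alpha) a HX HXminus Hminus Ha) as [m Hm].
      exists m. unfold sec_start, sec_angle in Hm; simpl in Hm. apply Rabs_le. lra.
  - apply (return_time_angle_bound N theta beta alpha b Htheta); [apply Hplus | lra | |].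
    + apply (first_return_separated theta _ (Xplus beta) b HX HXplus Hplus).
    + destruct (first_return_displacement theta _ (Xplus beta) b HX HXplus Hplus Hb) as [m Hm].
      exists m. unfold sec_start, sec_angle in Hm; simpl in Hm. apply Rabs_le. lra.
Qed.

Lemma renorm_triangulation_angle theta alpha beta a b S :
  In S (renorm_triangulation theta alpha beta a b) ->
  sec_angle S = alpha \/ sec_angle S = beta.
Proof.
  unfold renorm_triangulation. intros HS. apply in_app_or in HS.
  destruct HS as [HS | HS]; apply in_map_iff in HS as [i [<- _]]; [left | right]; reflexivity.
Qed.

Lemma ratio_bounds c s1 s2 : 0 < c -> 0 < s1 -> 0 < s2 ->
  s1 * c <= 2 * s2 -> s2 * c <= 2 * s1 -> / (2 / c) <= s1 / s2 <= 2 / c.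
Proof.
  intros Hc H1 H2 H12 H21. rewrite Rinv_div. split.
  - apply (Rmult_le_reg_r (2 * s2)); [lra|].
    replace (c / 2 * (2 * s2)) with (s2 * c) by field.
    replace (s1 / s2 * (2 * s2)) with (2 * s1) by (field; lra). exact H21.
  - apply (Rmult_le_reg_r (c * s2)); [nra|].
    replace (s1 / s2 * (c * s2)) with (s1 * c) by (field; lra).
    replace (2 / c * (c * s2)) with (2 * s2) by (field; lra). exact H12.
Qed.

Theorem lemmaA3 :
  forall N : nat, exists t : R, 1 < t /\
    forall (theta alpha beta : R) (a b : nat),
      in_Theta N theta ->
      sector_renormalization theta alpha beta a b ->
      forall S1 S2 : sector,
        In S1 (renorm_triangulation theta alpha beta a b) ->
        In S2 (renorm_triangulation theta alpha beta a b) ->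
        0 < sec_angle S1 -> 0 < sec_angle S2 ->
        / t <= sec_angle S1 / sec_angle S2 <= t.
Proof.
  intros N. set (c := approx_const (INR N + 1)).
  assert (HM : 1 <= INR N + 1) by (pose proof (pos_INR N); lra).
  assert (Hc : 0 < c) by apply (approx_const_pos _ HM).
  assert (Hc1 : c < 1) by (pose proof (approx_const_spec _ HM) as H8; fold c in H8; nra).
  exists (2 / c). split.
  { apply (Rmult_lt_reg_r c); [exact Hc|]. replace (2 / c * c) with 2 by (field; lra). lra. }
  intros theta alpha beta a b Htheta Hren S1 S2 HS1 HS2 Hpos1 Hpos2.
  destruct (renormalization_angles_comparable N theta alpha beta a b Htheta Hren) as [Hab Hba].
  fold c in Hab, Hba.
  apply ratio_bounds; auto;
    destruct (renorm_triangulation_angle _ _ _ _ _ _ HS1) as [-> | ->];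
    destruct (renorm_triangulation_angle _ _ _ _ _ _ HS2) as [-> | ->];
    solve [assumption | nra].
Qed.
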